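(* Let $0<\alpha<1$, $\lambda>0$, $L>0$, $T>0$, $r\ge1$, and let $M,N$ be positive integers. For any data $f$ and $\phi$, the finite difference scheme $$\delta_t U_i^{n+\frac12}+{}_0^{FC}D_t^{\alpha,\lambda}U_i^{n+\frac12}=\delta_x^2U_i^{\bar n}-\tilde\delta_xU_i^{\bar n}+f_i^{n+\frac12},\quad 1\le i\le M-1,\ 0\le n\le N-1,$$ $$U_i^0=\phi(x_i),\ 1\le i\le M-1,\qquad U_0^n=U_M^n=0,\ 0\le n\le N,$$ has a unique solution $\{U_i^n\}$.
   Context: The scheme discretizes $u_t+{}_0^C D_t^{\alpha,\lambda}u=u_{xx}-u_x+f$ on $(0,L)\times(0,T]$, $u(x,0)=\phi(x)$, $u(0,t)=u(L,t)=0$. Grids: $h=L/M$, $x_i=ih$; $t_n=T(n/N)^r$, $\tau_n=t_n-t_{n-1}$, $t_{m+\frac12}=\frac12(t_m+t_{m+1})$; $f_i^{n+\frac12}=f(x_i,t_{n+\frac12})$. Difference operators: $\delta_tU_i^{n+\frac12}=(U_i^{n+1}-U_i^n)/\tau_{n+1}$, $\tilde\delta_xU_i^n=(U_{i+1}^n-U_{i-1}^n)/(2h)$, $\delta_x^2U_i^n=(U_{i+1}^n-2U_i^n+U_{i-1}^n)/h^2$, $\tilde\delta_xU_i^{\bar n}=\frac12(\tilde\delta_xU_i^{n+1}+\tilde\delta_xU_i^n)$, $\delta_x^2U_i^{\bar n}=\frac12(\delta_x^2U_i^{n+1}+\delta_x^2U_i^n)$. Fast operator: fix $\varepsilon>0$,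 a positive integer $N_{exp}$ and $s_i>0,\omega_i>0$ with $|t^{-1-\alpha}-\sum_{i=1}^{N_{exp}}\omega_ie^{-s_it}|\le\varepsilon$ on $[\tau_1,T]$. For $1\le m\le N-1$: $\lambda^1_{i,m}=\int_{t_{m-1}}^{t_m}e^{-(\lambda+s_i)(t_{m+\frac12}-s)}\frac{s-t_{m-1}}{\tau_m}ds$, $\lambda^2_{i,m}=\int_{t_{m-1}}^{t_m}e^{-(\lambda+s_i)(t_{m+\frac12}-s)}\frac{t_m-s}{\tau_m}ds$; $a_{j,n}=\alpha\sum_i\omega_ie^{-(\lambda+s_i)(t_{n+\frac12}-t_{n-j+\frac12})}\lambda^1_{i,n-j}$, $b_{j,n}=\alpha\sum_i\omega_ie^{-(\lambda+s_i)(t_{n+\frac12}-t_{n-j+\frac12})}\lambda^2_{i,n-j}$. For a sequence $v^0,\dots,v^N$ (here $v^n=U_i^n$ for fixed $i$): ${}_0^{FC}D_t^{\alpha,\lambda}v^{n+\frac12}=\frac{1}{\Gamma(1-\alpha)}\Big[\frac{v^n+v^{n+1}}{2(1-\alpha)(\tau_{n+1}/2)^\alpha}-\big(a_{0,n}+\frac{\alpha e^{-\lambda\tau_{n+1}/2}}{(1-\alpha)(\tau_{n+1}/2)^\alpha}\big)v^n-\sum_{l=1}^{n-1}(a_{n-l,n}+b_{n-1-l,n})v^l-\big(b_{n-1,n}+\frac{e^{-\lambda t_{n+\frac12}}}{t_{n+\frac12}^\alpha}\big)v^0\Big]$, with $a_{0,0}=b_{-1,0}:=0$ and empty sums $0$.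 *)

From Stdlib Require Import Reals.
From Coquelicot Require Import Coquelicot.
Open Scope R_scope.

Definition Gamma (z : R) : R :=
  RInt_gen (fun t => Rpower t (z - 1) * exp (- t)) (at_right 0) (Rbar_locally p_infty).

Fixpoint sum1 (n : nat) (g : nat -> R) : R :=
  match n with
  | O => 0
  | S k => sum1 k g + g (S k)
  end.

Definition tg (T : R) (N : nat) (r : R) (n : nat) : R :=
  match n with
  | O => 0
  | S _ => T * Rpower (INR n / INR N) r
  end.

Definition tau (T : R) (N : nat) (r : R) (n : nat) : R :=
  tg T N r n - tg T N r (n - 1).

Definition tmid (T : R) (N : nat) (r : R) (m : nat) : R :=
  (tg T N r m + tg T N r (m + 1)) / 2.

Section FastOp.
Variables (alpha lambda T r : R) (N Nexp : nat) (s w : nat -> R).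

Let t := tg T N r.
Let tau' := tau T N r.
Let tm := tmid T N r.

Definition lam1 (i m : nat) : R :=
  RInt (fun y => exp (- (lambda + s i) * (tm m - y)) * ((y - t (m - 1)%nat) / tau' m))
       (t (m - 1)%nat) (t m).

Definition lam2 (i m : nat) : R :=
  RInt (fun y => exp (- (lambda + s i) * (tm m - y)) * ((t m - y) / tau' m))
       (t (m - 1)%nat) (t m).

Definition acoef (j n : nat) : R :=
  alpha * sum1 Nexp (fun i => w i * exp (- (lambda + s i) * (tm n - tm (n - j)%nat)) * lam1 i (n - j)%nat).

Definition bcoef (j n : nat) : R :=
  alpha * sum1 Nexp (fun i => w i * exp (- (lambda + s i) * (tm n - tm (n - j)%nat)) * lam2 i (n - j)%nat).

(* conventions a_{0,0} = b_{-1,0} = 0 *)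
Definition a0 (n : nat) : R := match n with O => 0 | S _ => acoef 0 n end.
Definition bl (n : nat) : R := match n with O => 0 | S _ => bcoef (n - 1)%nat n end.

Definition FCD (v : nat -> R) (n : nat) : R :=
  / Gamma (1 - alpha) *
  ( (v n + v (n + 1)%nat) / (2 * (1 - alpha) * Rpower (tau' (n + 1)%nat / 2) alpha)
    - (a0 n + alpha * exp (- lambda * tau' (n + 1)%nat / 2)
                / ((1 - alpha) * Rpower (tau' (n + 1)%nat / 2) alpha)) * v n
    - sum1 (n - 1)%nat (fun l => (acoef (n - l)%nat n + bcoef (n - 1 - l)%nat n) * v l)
    - (bl n + exp (- lambda * tm n) / Rpower (tm n) alpha) * v 0%nat ).

End FastOp.

Definition dx2 (h : R) (U : nat -> nat -> R) (i n : nat) : R :=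
  (U (i + 1)%nat n - 2 * U i n + U (i - 1)%nat n) / (h * h).
Definition dxt (h : R) (U : nat -> nat -> R) (i n : nat) : R :=
  (U (i + 1)%nat n - U (i - 1)%nat n) / (2 * h).

(* U (indexed U i n ~ U_i^n) solves the scheme *)
Definition solves_scheme (alpha lambda L T r : R) (M N Nexp : nat) (s w : nat -> R)
    (f : R -> R -> R) (phi : R -> R) (U : nat -> nat -> R) : Prop :=
  let h := L / INR M in
  (forall i n, (1 <= i <= M - 1)%nat -> (n <= N - 1)%nat ->
     (U i (n + 1)%nat - U i n) / tau T N r (n + 1)%nat
     + FCD alpha lambda T r N Nexp s w (fun k => U i k) n
     = (dx2 h U i n + dx2 h U i (n + 1)%nat) / 2
       - (dxt h U i n + dxt h U i (n + 1)%nat) / 2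
       + f (INR i * h) (tmid T N r n)) /\
  (forall i, (1 <= i <= M - 1)%nat -> U i 0%nat = phi (INR i * h)) /\
  (forall n, (n <= N)%nat -> U 0%nat n = 0 /\ U M n = 0).

(* Each time level of the scheme is a linear system for U^{n+1}: the residual of the equation
   at level n depends on U^{n+1} only through step_op c h U^{n+1}, where
   c = 1/tau_{n+1} + (coefficient of v^{n+1} in FCD) > 0; positivity holds because
   Gamma >= 0, also where its integral diverges and RInt_gen is 0.
   Multiplying step_op c h e by e and summing, the second difference yields a sum of squares and
   the centred first difference telescopes, so for e vanishing at 0 and M the sum is
   c |e|^2 + (|grad e|^2 + e_(M-1)^2) / (2 h^2): step_op is injective on such e.  An injective
   square system is solvable, so every level exists and is unique, and induction on n gives
   the theorem.  Only the diagonal coefficient of the fast operator enters. *)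

From Stdlib Require Import Reals Lra Lia Classical.
From Coquelicot Require Import Coquelicot.
Open Scope R_scope.

Lemma sum1_ext K g g' : (forall i, (1 <= i <= K)%nat -> g i = g' i) -> sum1 K g = sum1 K g'.
Proof.
  induction K as [|K IH]; intros Hg; simpl; [reflexivity|].
  rewrite IH by (intros; apply Hg; lia). rewrite Hg by lia. reflexivity.
Qed.

Lemma sum1_eq0 K g : (forall i, (1 <= i <= K)%nat -> g i = 0) -> sum1 K g = 0.
Proof.
  induction K as [|K IH]; intros Hg; simpl; [reflexivity|].
  rewrite IH by (intros; apply Hg; lia). rewrite Hg by lia. ring.
Qed.

Lemma sum1_ge0 K g : (forall i, (1 <= i <= K)%nat -> 0 <= g i) -> 0 <= sum1 K g.
Proof.
  induction K as [|K IH]; intros Hg; simpl; [lra|].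
  assert (0 <= sum1 K g) by (apply IH; intros; apply Hg; lia).
  assert (0 <= g (S K)) by (apply Hg; lia). lra.
Qed.

Lemma le_sum1_term K g j :
  (forall i, (1 <= i <= K)%nat -> 0 <= g i) -> (1 <= j <= K)%nat -> g j <= sum1 K g.
Proof.
  induction K as [|K IH]; intros Hg Hj; [lia|simpl].
  assert (0 <= sum1 K g) by (apply sum1_ge0; intros; apply Hg; lia).
  assert (0 <= g (S K)) by (apply Hg; lia).
  destruct (Nat.eq_dec j (S K)) as [->|Hne]; [lra|].
  assert (g j <= sum1 K g) by (apply IH; [intros; apply Hg|]; lia). lra.
Qed.

Definition step_op (d h : R) (e : nat -> R) (i : nat) : R :=
  d * e i - (e (i + 1)%nat - 2 * e i + e (i - 1)%nat) / (h * h) / 2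
  + (e (i + 1)%nat - e (i - 1)%nat) / (2 * h) / 2.

Lemma step_op_ext d h e e' i : (forall k, e k = e' k) -> step_op d h e i = step_op d h e' i.
Proof. intros He; unfold step_op; rewrite !He; reflexivity. Qed.

Lemma sum1_mul_step_op d h e K : h <> 0 ->
  sum1 K (fun i => e i * step_op d h e i) =
  d * sum1 K (fun i => e i * e i)
  + (sum1 K (fun i => (e i - e (i - 1)%nat) * (e i - e (i - 1)%nat))
     - e K * (e (S K) - e K) + e 0%nat * (e 1%nat - e 0%nat)) / (2 * (h * h))
  + (e K * e (S K) - e 0%nat * e 1%nat) / (4 * h).
Proof.
  intros Hh. induction K as [|K IH]; simpl sum1; [field; exact Hh|].
  rewrite IH, Nat.sub_0_r. unfold step_op.
  replace (S K - 1)%nat with K by lia. replace (S K + 1)%nat with (S (S K)) by lia.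
  field; exact Hh.
Qed.

Lemma sum1_mul_step_op_dirichlet d h e K : h <> 0 -> e 0%nat = 0 -> e (S K) = 0 ->
  sum1 K (fun i => e i * step_op d h e i) =
  d * sum1 K (fun i => e i * e i)
  + (sum1 K (fun i => (e i - e (i - 1)%nat) * (e i - e (i - 1)%nat)) + e K * e K)
    / (2 * (h * h)).
Proof. intros Hh He0 HeK. rewrite sum1_mul_step_op, He0, HeK by exact Hh. field; exact Hh. Qed.

Lemma step_op_injective d h K e : 0 < d -> 0 < h -> e 0%nat = 0 -> e (S K) = 0 ->
  (forall i, (1 <= i <= K)%nat -> step_op d h e i = 0) ->
  forall i, (1 <= i <= K)%nat -> e i = 0.
Proof.
  intros Hd Hh He0 HeK He i Hi.
  assert (Henergy := sum1_mul_step_op_dirichlet d h e K ltac:(lra) He0 HeK).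
  rewrite sum1_eq0 in Henergy by (intros j Hj; rewrite He by exact Hj; ring).
  set (S2 := sum1 K (fun i => e i * e i)) in Henergy.
  set (D2 := sum1 K (fun i => (e i - e (i - 1)%nat) * (e i - e (i - 1)%nat))) in Henergy.
  assert (HS2 : 0 <= S2) by (apply sum1_ge0; intros; apply Rle_0_sqr).
  assert (HD2 : 0 <= D2) by (apply sum1_ge0; intros; apply Rle_0_sqr).
  assert (Hgrad : 0 <= (D2 + e K * e K) / (2 * (h * h))).
  { pose proof (Rle_0_sqr (e K)); unfold Rsqr in *.
    apply Rmult_le_pos; [lra|]. apply Rlt_le, Rinv_0_lt_compat; nra. }
  assert (S2_0 : S2 = 0).
  { assert (0 <= d * S2) by (apply Rmult_le_pos; lra).
    assert (d * S2 = 0) by lra. destruct (Rmult_integral d S2); lra. }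
  assert (e i * e i <= S2)
    by (apply (le_sum1_term K (fun i => e i * e i)); [intros; apply Rle_0_sqr|exact Hi]).
  nra.
Qed.

From mathcomp Require all_boot all_algebra Rstruct.
Module LinearSystem.
Import all_boot all_algebra Rstruct GRing.Theory.
Local Open Scope ring_scope.

Lemma sum1_big m g : sum1 m g = \sum_(i < m) g i.+1.
Proof. elim: m => [|m IH] /=; first by rewrite big_ord0. by rewrite big_ord_recr /= IH. Qed.

(* Stated with Rmult, R0 and %coq_nat so that it reads as the Stdlib statement outside this
   module. *)
Lemma sum1_system_solvable (m : nat) (F : nat -> nat -> R) :
  (forall v : nat -> R,
     (forall j, (1 <= j)%coq_nat /\ (j <= m)%coq_nat ->
        sum1 m (fun i => Rmult (v i) (F i j)) = R0) ->
     forall i, (1 <= i)%coq_nat /\ (i <= m)%coq_nat -> v i = R0) ->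
  forall b : nat -> R, exists v : nat -> R,
    forall j, (1 <= j)%coq_nat /\ (j <= m)%coq_nat ->
      sum1 m (fun i => Rmult (v i) (F i j)) = b j.
Proof.
move=> F_inj b.
pose A : 'M[R]_m := \matrix_(i < m, j < m) F i.+1 j.+1.
pose vf (v : 'rV[R]_m) (k : nat) : R :=
  if (insub k.-1 : option 'I_m) is Some i then v 0 i else 0.
have vfE v (i : 'I_m) : vf v i.+1 = v 0 i by rewrite /vf /= valK.
have in_range (j : nat) : (1 <= j)%coq_nat /\ (j <= m)%coq_nat -> (j.-1 < m)%N /\ j = j.-1.+1.
  by case=> /leP j_gt0 /leP j_le_m; rewrite prednK.
have sumE v (j : 'I_m) : sum1 m (fun i => Rmult (vf v i) (F i j.+1)) = (v *m A) 0 j.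
  by rewrite sum1_big mxE; apply: eq_bigr => i _; rewrite vfE mxE.
have unitA : A \in unitmx.
  rewrite unitmxE unitfE; apply/negP => /det0P [v v_neq0 vA0].
  move/negP: v_neq0; apply; apply/eqP/rowP => i.
  rewrite [RHS]mxE -vfE; apply: F_inj; last by split; apply/leP.
  move=> j /in_range [j_lt_m ->]; by rewrite (sumE v (Ordinal j_lt_m)) vA0 mxE.
exists (vf ((\row_(j < m) b j.+1) *m invmx A)) => j /in_range [j_lt_m ->].
by rewrite (sumE _ (Ordinal j_lt_m)) mulmxKV // mxE.
Qed.

End LinearSystem.

Lemma step_op_sum1 d h m (v : nat -> R) (E : nat -> nat -> R) j :
  step_op d h (fun k => sum1 m (fun i => v i * E i k)) j
  = sum1 m (fun i => v i * step_op d h (E i) j).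
Proof.
  induction m as [|m IH]; simpl sum1.
  - unfold step_op, Rdiv; ring.
  - rewrite <- IH. unfold step_op, Rdiv; ring.
Qed.

Definition kronecker (i k : nat) : R := if Nat.eqb k i then 1 else 0.

Lemma sum1_kronecker_out m v k :
  (k = 0 \/ m < k)%nat -> sum1 m (fun i => v i * kronecker i k) = 0.
Proof.
  intros Hk. apply sum1_eq0. intros i Hi. unfold kronecker.
  destruct (Nat.eqb_spec k i); [lia|ring].
Qed.

Lemma sum1_kronecker m v k : (1 <= k <= m)%nat -> sum1 m (fun i => v i * kronecker i k) = v k.
Proof.
  induction m as [|m IH]; intros Hk; [lia|simpl sum1].
  unfold kronecker at 2. destruct (Nat.eqb_spec k (S m)) as [->|Hne].
  - rewrite sum1_kronecker_out by lia. ring.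
  - rewrite IH by lia. ring.
Qed.

Lemma step_op_surjective d h K (b : nat -> R) : 0 < d -> 0 < h ->
  exists x : nat -> R, x 0%nat = 0 /\ x (S K) = 0 /\
    forall i, (1 <= i <= K)%nat -> step_op d h x i = b i.
Proof.
  intros Hd Hh.
  set (extend := fun (v : nat -> R) k => sum1 K (fun i => v i * kronecker i k)).
  assert (extend_0 : forall v, extend v 0%nat = 0) by (intros; apply sum1_kronecker_out; lia).
  assert (extend_S : forall v, extend v (S K) = 0) by (intros; apply sum1_kronecker_out; lia).
  assert (step_extend : forall v j, step_op d h (extend v) j
            = sum1 K (fun i => v i * step_op d h (kronecker i) j)) by (intros; apply step_op_sum1).
  destruct (LinearSystem.sum1_system_solvable K (fun i j => step_op d h (kronecker i) j))
    with (b := b) as [v Hv].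
  - intros v Hv i Hi.
    rewrite <- (sum1_kronecker K v i Hi).
    apply (step_op_injective d h K (extend v) Hd Hh (extend_0 v) (extend_S v)); [|exact Hi].
    intros j Hj. rewrite step_extend. apply Hv, Hj.
  - exists (extend v). split; [apply extend_0|split; [apply extend_S|]].
    intros i Hi. rewrite step_extend. apply Hv, Hi.
Qed.

Lemma iota_R_empty (P : R -> Prop) : (forall x, ~ P x) -> iota P = 0.
Proof.
  intros HP. unfold iota; change (lim ?F) with (R_complete_lim F); unfold R_complete_lim.
  match goal with |- real (Lub_Rbar ?S) = 0 =>
    assert (HS : forall x, S x) by (intros x y Py; exfalso; exact (HP y Py));
    destruct (Lub_Rbar_correct S) as [Hub _]; destruct (Lub_Rbar S) as [l| |] end.
  - assert (Hl : Rbar_le (l + 1) l) by (apply Hub, HS). simpl in Hl; lra.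
  - reflexivity.
  - assert (Hl : Rbar_le 0 m_infty) by (apply Hub, HS). contradiction.
Qed.

Lemma is_RInt_gen_ge0 {Fa Fb : (R -> Prop) -> Prop}
  {FFa : ProperFilter Fa} {FFb : ProperFilter Fb} (f : R -> R) (l : R) :
  filter_prod Fa Fb (fun ab => fst ab <= snd ab) -> (forall x, 0 <= f x) ->
  is_RInt_gen f Fa Fb l -> 0 <= l.
Proof.
  intros Hab Hf Hl.
  assert (Hscal0 : forall u : R, norm (scal 0 u) = 0).
  { intros u. unfold norm, scal; simpl; unfold abs, mult; simpl. rewrite Rmult_0_l. apply Rabs_R0. }
  assert (Hnorm := RInt_gen_norm (fun y => scal 0 (f y)) f (scal 0 l) l Hab
    (filter_forall _ (fun ab x _ => eq_ind_r (fun a => a <= f x) (Hf x) (Hscal0 (f x))))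
    (is_RInt_gen_scal f 0 l Hl) Hl).
  rewrite Hscal0 in Hnorm. exact Hnorm.
Qed.

Lemma at_right0_p_infty_le :
  filter_prod (at_right 0) (Rbar_locally p_infty) (fun ab => fst ab <= snd ab).
Proof.
  exists (fun a => a < 1) (fun b => 1 < b).
  - exists (mkposreal 1 Rlt_0_1). intros y Hy _.
    unfold ball in Hy; simpl in Hy; unfold AbsRing_ball, abs, minus, plus, opp in Hy; simpl in Hy.
    apply Rabs_lt_between in Hy. lra.
  - exists 1. intros; lra.
  - simpl; intros; lra.
Qed.

Lemma Gamma_ge0 z : 0 <= Gamma z.
Proof.
  unfold Gamma.
  set (g := fun t => Rpower t (z - 1) * exp (- t)).
  destruct (classic (exists l, is_RInt_gen g (at_right 0) (Rbar_locally p_infty) l))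
    as [[l Hl]|Hn].
  - rewrite (is_RInt_gen_unique g l Hl).
    apply (is_RInt_gen_ge0 g l at_right0_p_infty_le); [|exact Hl].
    intros t; apply Rlt_le, Rmult_lt_0_compat; apply exp_pos.
  - unfold RInt_gen. rewrite iota_R_empty; [lra|]. intros l Hl; exact (Hn (ex_intro _ l Hl)).
Qed.

Lemma tau_pos T N r n : 0 < T -> 0 < r -> (n < N)%nat -> 0 < tau T N r (n + 1).
Proof.
  intros HT Hr Hn. unfold tau.
  replace (n + 1 - 1)%nat with n by lia. replace (n + 1)%nat with (S n) by lia.
  assert (HN : 0 < INR N) by (apply lt_0_INR; lia).
  unfold tg. destruct n as [|k].
  - rewrite Rminus_0_r. apply Rmult_lt_0_compat; [lra|]. unfold Rpower; apply exp_pos.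
  - apply Rlt_0_minus, Rmult_lt_compat_l; [exact HT|]. apply Rlt_Rpower_l; [exact Hr|split].
    + apply Rdiv_lt_0_compat; [apply lt_0_INR; lia|exact HN].
    + apply Rmult_lt_compat_r; [apply Rinv_0_lt_compat, HN|]. apply lt_INR; lia.
Qed.

Definition FCD_diag (alpha T : R) (N : nat) (r : R) (n : nat) : R :=
  / Gamma (1 - alpha) * / (2 * (1 - alpha) * Rpower (tau T N r (n + 1) / 2) alpha).

Lemma FCD_diag_ge0 alpha T N r n : alpha < 1 -> 0 <= FCD_diag alpha T N r n.
Proof.
  intros Halpha. unfold FCD_diag. apply Rmult_le_pos.
  - destruct (Gamma_ge0 (1 - alpha)) as [Hpos|Hzero].
    + apply Rlt_le, Rinv_0_lt_compat, Hpos.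
    + rewrite <- Hzero, Rinv_0. lra.
  - apply Rlt_le, Rinv_0_lt_compat, Rmult_lt_0_compat; [lra|]. unfold Rpower; apply exp_pos.
Qed.

Lemma FCD_sub alpha lambda T r N Nexp s w (v v' : nat -> R) n :
  (forall k, (k <= n)%nat -> v k = v' k) ->
  FCD alpha lambda T r N Nexp s w v n - FCD alpha lambda T r N Nexp s w v' n
  = FCD_diag alpha T N r n * (v (n + 1)%nat - v' (n + 1)%nat).
Proof.
  intros Hv. unfold FCD, FCD_diag.
  rewrite (sum1_ext (n - 1) (fun l => _ * v l) (fun l => _ * v' l))
    by (intros l Hl; rewrite Hv by lia; reflexivity).
  rewrite (Hv n), (Hv 0%nat) by lia. unfold Rdiv; ring.
Qed.

Section Scheme.

Variables (alpha lambda L T r : R) (M N Nexp : nat) (s w : nat -> R).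
Variables (f : R -> R -> R) (phi : R -> R).
Hypotheses (Halpha : alpha < 1) (HL : 0 < L) (HT : 0 < T) (Hr : 0 < r).
Hypotheses (HM : (1 <= M)%nat) (HN : (1 <= N)%nat).

Local Notation h := (L / INR M).

Definition residual (U : nat -> nat -> R) (i n : nat) : R :=
  (U i (n + 1)%nat - U i n) / tau T N r (n + 1)
  + FCD alpha lambda T r N Nexp s w (fun k => U i k) n
  - ((dx2 h U i n + dx2 h U i (n + 1)%nat) / 2
     - (dxt h U i n + dxt h U i (n + 1)%nat) / 2
     + f (INR i * h) (tmid T N r n)).

Definition step_coef (n : nat) : R := / tau T N r (n + 1) + FCD_diag alpha T N r n.

Lemma step_coef_pos n : (n < N)%nat -> 0 < step_coef n.
Proof.
  intros Hn. unfold step_coef.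
  pose proof (Rinv_0_lt_compat _ (tau_pos T N r n HT Hr Hn)).
  pose proof (FCD_diag_ge0 alpha T N r n Halpha). lra.
Qed.

Lemma h_pos : 0 < h.
Proof. apply Rdiv_lt_0_compat; [exact HL|apply lt_0_INR; lia]. Qed.

Lemma residual_sub U V i n :
  (forall j k, (i - 1 <= j <= i + 1)%nat -> (k <= n)%nat -> U j k = V j k) ->
  residual U i n - residual V i n
  = step_op (step_coef n) h (fun j => U j (n + 1)%nat - V j (n + 1)%nat) i.
Proof.
  intros HUV.
  assert (HFCD := FCD_sub alpha lambda T r N Nexp s w (fun k => U i k) (fun k => V i k) n
                    (fun k Hk => HUV i k ltac:(lia) Hk)).
  unfold residual, step_op, step_coef, dx2, dxt.
  rewrite !(HUV _ n) by lia.
  unfold Rdiv in *; lra.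
Qed.

Local Notation solves := (solves_scheme alpha lambda L T r M N Nexp s w f phi).

Lemma solves_residual U : solves U ->
  forall i n, (1 <= i <= M - 1)%nat -> (n < N)%nat -> residual U i n = 0.
Proof.
  intros [Heq _] i n Hi Hn. unfold residual.
  rewrite (Heq i n Hi ltac:(lia)). apply Rminus_diag_eq; reflexivity.
Qed.

Lemma solves_unique U V : solves U -> solves V ->
  forall n i, (n <= N)%nat -> (i <= M)%nat -> U i n = V i n.
Proof.
  intros HU HV.
  pose proof (solves_residual U HU) as HUres. pose proof (solves_residual V HV) as HVres.
  destruct HU as [_ [HU0 HUb]], HV as [_ [HV0 HVb]].
  assert (boundary : forall n i, (n <= N)%nat -> (i = 0 \/ i = M)%nat -> U i n = V i n).
  { intros n i Hn [-> | ->]; destruct (HUb n Hn), (HVb n Hn); congruence. }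
  enough (Hupto : forall n, (n <= N)%nat ->
            forall k i, (k <= n)%nat -> (i <= M)%nat -> U i k = V i k)
    by (intros n i Hn Hi; exact (Hupto n Hn n i (le_n n) Hi)).
  induction n as [|n IH]; intros Hn k i Hk Hi.
  - destruct (Nat.eq_dec i 0), (Nat.eq_dec i M); try (apply boundary; lia).
    replace k with 0%nat by lia. rewrite HU0, HV0 by lia. reflexivity.
  - destruct (Nat.le_gt_cases k n); [apply IH; lia|].
    replace k with (n + 1)%nat by lia.
    set (e := fun j => U j (n + 1)%nat - V j (n + 1)%nat).
    assert (Hstep : forall j, (1 <= j <= M - 1)%nat -> step_op (step_coef n) h e j = 0).
    { intros j Hj. unfold e. rewrite <- residual_sub.
      - rewrite HUres, HVres by lia. ring.
      - intros j' k' Hj' Hk'. apply IH; lia. }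
    assert (He0 : e 0%nat = 0) by (unfold e; rewrite boundary by lia; ring).
    assert (HeM : e (S (M - 1)) = 0) by (unfold e; rewrite boundary by lia; ring).
    destruct (Nat.eq_dec i 0), (Nat.eq_dec i M); try (apply boundary; lia).
    apply Rminus_diag_uniq.
    exact (step_op_injective _ _ (M - 1) e (step_coef_pos n ltac:(lia)) h_pos He0 HeM Hstep i
             ltac:(lia)).
Qed.

(* The last clause makes residual U i n depend on the new level only through step_op. *)
Definition partial_solution (n : nat) (U : nat -> nat -> R) : Prop :=
  (forall i k, (1 <= i <= M - 1)%nat -> (k < n)%nat -> residual U i k = 0) /\
  (forall i, (1 <= i <= M - 1)%nat -> U i 0%nat = phi (INR i * h)) /\
  (forall k, (k <= n)%nat -> U 0%nat k = 0 /\ U M k = 0) /\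
  (forall i k, (n < k)%nat -> U i k = 0).

Lemma partial_solution_0 : exists U, partial_solution 0 U.
Proof.
  exists (fun i k => if (Nat.eqb k 0 && Nat.leb 1 i && Nat.leb i (M - 1))%bool
                  then phi (INR i * h) else 0).
  split; [|split; [|split]].
  - intros i k _ Hk. lia.
  - intros i Hi. cbv beta.
    rewrite (proj2 (Nat.leb_le 1 i)), (proj2 (Nat.leb_le i (M - 1))) by lia. reflexivity.
  - intros k Hk. replace k with 0%nat by lia. cbv beta.
    split; [reflexivity|].
    rewrite (proj2 (Nat.leb_gt M (M - 1))) by lia. rewrite Bool.andb_false_r. reflexivity.
  - intros i k Hk. destruct (Nat.eqb_spec k 0); [lia|reflexivity].
Qed.

Lemma partial_solution_S n U : (n < N)%nat -> partial_solution n U ->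
  exists U', partial_solution (S n) U'.
Proof.
  intros Hn [Hres [H0 [Hb Hzero]]].
  destruct (step_op_surjective (step_coef n) h (M - 1) (fun i => - residual U i n)
              (step_coef_pos n Hn) h_pos) as [x [Hx0 [HxM Hx]]].
  replace (S (M - 1)) with M in HxM by lia.
  set (U' := fun i k => if Nat.eqb k (n + 1) then x i else U i k).
  assert (old : forall i k, (k <= n)%nat -> U' i k = U i k).
  { intros i k Hk. unfold U'. destruct (Nat.eqb_spec k (n + 1)); [lia|reflexivity]. }
  assert (new : forall i, U' i (n + 1)%nat = x i)
    by (intros; unfold U'; rewrite Nat.eqb_refl; reflexivity).
  exists U'. split; [|split; [|split]].
  - intros i k Hi Hk.
    replace (residual U' i k) with (residual U i k + (residual U' i k - residual U i k)) by ring.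
    rewrite residual_sub by (intros; apply old; lia).
    destruct (Nat.eq_dec k n) as [->|Hkn].
    + rewrite (step_op_ext _ _ _ x) by (intros j; rewrite new, (Hzero j) by lia; ring).
      rewrite Hx by exact Hi. ring.
    + rewrite Hres by lia.
      rewrite (step_op_ext _ _ _ (fun _ => 0)) by (intros j; rewrite old by lia; ring).
      unfold step_op, Rdiv; ring.
  - intros i Hi. rewrite old by lia. apply H0, Hi.
  - intros k Hk. destruct (Nat.eq_dec k (n + 1)) as [->|Hkn].
    + rewrite !new. split; assumption.
    + rewrite !old by lia. apply Hb; lia.
  - intros i k Hk. unfold U'. destruct (Nat.eqb_spec k (n + 1)); [lia|]. apply Hzero; lia.
Qed.

Lemma partial_solution_exists n : (n <= N)%nat -> exists U, partial_solution n U.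
Proof.
  induction n as [|n IH]; intros Hn; [exact partial_solution_0|].
  destruct (IH ltac:(lia)) as [U HU]. exact (partial_solution_S n U ltac:(lia) HU).
Qed.

Lemma solves_exists : exists U, solves U.
Proof.
  destruct (partial_solution_exists N (le_n N)) as [U [Hres [H0 [Hb _]]]].
  exists U. split; [|split; [exact H0|exact Hb]].
  intros i n Hi Hn. apply Rminus_diag_uniq. exact (Hres i n Hi ltac:(lia)).
Qed.

End Scheme.

Theorem mainTheorem3
  (alpha lambda L T r eps : R) (M N Nexp : nat) (s w : nat -> R)
  (f : R -> R -> R) (phi : R -> R)
  (Halpha : 0 < alpha < 1) (Hlambda : 0 < lambda) (HL : 0 < L) (HT : 0 < T)
  (Hr : 1 <= r) (HM : (1 <= M)%nat) (HN : (1 <= N)%nat)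
  (Heps : 0 < eps) (HNexp : (1 <= Nexp)%nat)
  (Hsw : forall i, (1 <= i <= Nexp)%nat -> 0 < s i /\ 0 < w i)
  (Happrox : forall y, tau T N r 1 <= y <= T ->
     Rabs (Rpower y (-1 - alpha) - sum1 Nexp (fun i => w i * exp (- s i * y))) <= eps) :
  (exists U, solves_scheme alpha lambda L T r M N Nexp s w f phi U) /\
  (forall U V, solves_scheme alpha lambda L T r M N Nexp s w f phi U ->
               solves_scheme alpha lambda L T r M N Nexp s w f phi V ->
               forall i n, (i <= M)%nat -> (n <= N)%nat -> U i n = V i n).
Proof.
  assert (Halpha1 : alpha < 1) by lra.
  assert (Hr0 : 0 < r) by lra.
  split.
  - exact (solves_exists alpha lambda L T r M N Nexp s w f phi Halpha1 HL HT Hr0 HM HN).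
  - intros U V HU HV i n Hi Hn.
    exact (solves_unique alpha lambda L T r M N Nexp s w f phi Halpha1 HL HT Hr0 HM HN
             U V HU HV n i Hn Hi).
Qed.
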